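(* Let $A\in M_n(\mathbb{R})$ be nilpotent and let $\epsilon>0$. Then for every multiset $\Lambda=\{\lambda_1,\ldots,\lambda_n\}$ of complex numbers that is invariant under complex conjugation and satisfies $\sum_{i=1}^n|\lambda_i|^2<\epsilon^2$, there exists $M\in M_n(\mathbb{R})$ with $\|M-A\|<\epsilon$ and $\operatorname{spec}(M)=\Lambda$.
   Context: $M_n(\mathbb{R})$ is the set of real $n\times n$ matrices, $\|\cdot\|$ the Frobenius norm, and $\operatorname{spec}$ the spectrum as a multiset. *)

From HB Require Import structures.
From mathcomp Require Import all_boot all_order all_algebra.
From mathcomp Require Import reals.
From mathcomp.real_closed Require Import complex.
Set Implicit Arguments. Unset Strict Implicit. Unset Printing Implicit Defensive.
Import Order.TTheory GRing.Theory Num.Theory ComplexField.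
Local Open Scope ring_scope.

Definition frobenius {R : realType} {n : nat} (A : 'M[R]_n) : R :=
  Num.sqrt (\sum_(i < n) \sum_(j < n) A i j ^+ 2).

Definition nilpotent_mx {R : realType} {n : nat} (A : 'M[R]_n) : Prop :=
  exists k : nat, A ^+ k = 0.

Definition complexify {R : realType} {n : nat} (M : 'M[R]_n) : 'M[R[i]]_n :=
  map_mx (real_complex R) M.

(* spec(M) = lam as multisets: the eigenvalues of M (over C, counted with
   algebraic multiplicity) are exactly the entries of lam, i.e. the
   characteristic polynomial of M (over C) is prod_{x in lam} (X - x). *)
Definition spec_eq {R : realType} {n : nat} (M : 'M[R]_n) (lam : seq R[i]) : Prop :=
  char_poly (complexify M) = \prod_(x <- lam) ('X - x%:P).

Definition conj_invariant {R : realType} (lam : seq R[i]) : Prop :=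
  perm_eq [seq x^* | x <- lam] lam.

From HB Require Import structures.
From mathcomp Require Import all_boot all_order all_algebra.
From mathcomp Require Import reals.
From mathcomp.real_closed Require Import complex.
From mathcomp Require Import ring lra zify.
Import Order.TTheory GRing.Theory Num.Theory ComplexField.
Local Open Scope ring_scope.
Set Implicit Arguments. Unset Strict Implicit. Unset Printing Implicit Defensive.

(* A real nilpotent matrix A has a nonzero kernel vector c. The
   Householder reflection exchanging c with |c| e_1 is orthogonal and makes the
   first column of its conjugate of A vanish; by induction A = Q T Q^T with Q
   orthogonal and T strictly upper triangular.
   Cut T along the diagonal into 1 x 1 blocks, one per real eigenvalue a, and
   2 x 2 blocks [[0, t], [0, 0]], one per pair a +- ib. Replace them by [a] and
   by [[a, u], [v, a]] with u v = - b^2 (eigenvalues a +- ib), where u, v can be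
   chosen with (u - t)^2 + v^2 <= 2 b^2. The resulting block upper triangular M
   has spectrum Lambda and ||M - T||^2 <= sum |lambda_i|^2, and conjugating back
   by the orthogonal Q changes neither. *)

Section RingMatrix.
Variable R : comNzRingType.

Lemma char_poly_ublock m n (A : 'M[R]_m) (B : 'M[R]_(m, n)) (D : 'M[R]_n) :
  char_poly (block_mx A B 0 D) = char_poly A * char_poly D.
Proof.
rewrite /char_poly /char_poly_mx (scalar_mx_block m n) map_block_mx map_mx0.
by rewrite opp_block_mx add_block_mx oppr0 addr0 det_ublock.
Qed.

Lemma char_poly_conj n (P Q X : 'M[R]_n) : P *m Q = 1%:M ->
  char_poly (P *m X *m Q) = char_poly X.
Proof.
move=> PQ; rewrite /char_poly; set P' := map_mx polyC P; set Q' := map_mx polyC Q.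
have PQ' : P' *m Q' = 1%:M by rewrite -map_mxM PQ map_mx1.
have -> : char_poly_mx (P *m X *m Q) = P' *m char_poly_mx X *m Q'.
  rewrite /char_poly_mx !map_mxM mulmxBr mulmxBl.
  by rewrite mul_mx_scalar -scalemxAl PQ' scalemx1.
by rewrite !det_mulmx mulrAC -det_mulmx PQ' det1 mul1r.
Qed.

Lemma det_mx22 (A : 'M[R]_2) : \det A = A 0 0 * A 1 1 - A 0 1 * A 1 0.
Proof.
rewrite (expand_det_row _ 0) !big_ord_recl big_ord0 addr0 /cofactor !det_mx11 !mxE.
have -> : lift 0 (0 : 'I_1) = 1 :> 'I_2 by apply/val_inj.
have -> : lift 1 (0 : 'I_1) = 0 :> 'I_2 by apply/val_inj.
by rewrite /= expr0 expr1 !mul1r mulN1r mulrN.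
Qed.

Lemma conj_mxX n (P Q A : 'M[R]_n) k : P *m Q = 1%:M ->
  (P *m A *m Q) ^+ k = P *m A ^+ k *m Q.
Proof.
move=> PQ; elim: k => [|k IHk]; first by rewrite !expr0 mulmx1.
rewrite !exprSr -!mulmxE IHk -!mulmxA; congr (_ *m _).
by rewrite !mulmxA -[A ^+ k *m Q *m P]mulmxA (mulmx1C PQ) mulmx1.
Qed.

Lemma ublock_mxX m n (A : 'M[R]_m) (B : 'M[R]_(m, n)) (D : 'M[R]_n) k :
  exists Y, block_mx A B 0 D ^+ k = block_mx (A ^+ k) Y 0 (D ^+ k).
Proof.
elim: k => [|k [Y IHk]]; first by exists 0; rewrite !expr0 -scalar_mx_block.
exists (A ^+ k *m B + Y *m D).
by rewrite !exprSr -!mulmxE IHk mulmx_block !mulmx0 !mul0mx !addr0 add0r.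
Qed.

Lemma col0_eq0_ublock n (B : 'M[R]_(1 + n)) : col 0 B = 0 ->
  B = block_mx 0 (ursubmx B) 0 (drsubmx B).
Proof.
move=> /matrixP B0; rewrite -[B in LHS]submxK; congr block_mx;
  apply/matrixP => i j; rewrite (ord1 j) !mxE.
- by have := B0 (lshift n i) 0; rewrite !mxE => <-; congr (B _ _); apply: val_inj.
- by have := B0 (rshift 1 i) 0; rewrite !mxE => <-; congr (B _ _); apply: val_inj.
Qed.

Definition strictly_upper_mx n (T : 'M[R]_n) := forall i j : 'I_n, (j <= i)%N -> T i j = 0.

Lemma strictly_upper_ublock0 n (b : 'rV[R]_n) (D : 'M[R]_n) :
  strictly_upper_mx D -> strictly_upper_mx (block_mx 0 b 0 D : 'M_(1 + n)).
Proof.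
move=> sD i j ji; rewrite /block_mx mxE.
case: splitP => i' Hi; rewrite mxE; case: splitP => j' Hj; rewrite ?mxE //.
- by move: ji (ltn_ord i'); rewrite Hi Hj; lia.
- by apply: sD; move: ji; rewrite Hi Hj; lia.
Qed.

Section StrictlyUpperBlocks.
Variables (p m : nat) (T : 'M[R]_(p + m)).
Hypothesis sT : strictly_upper_mx T.

Lemma strictly_upper_drsub : strictly_upper_mx (drsubmx T).
Proof. by move=> i j ji; rewrite !mxE; apply: sT; rewrite /= leq_add2l. Qed.

Lemma strictly_upper_dlsub : dlsubmx T = 0.
Proof. by apply/matrixP => i j; rewrite !mxE; apply: sT => /=; move: (ltn_ord j); lia. Qed.

End StrictlyUpperBlocks.

End RingMatrix.

Section Reflection.
Variables (R : realFieldType) (m : nat).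
Implicit Types u v w x y : 'cV[R]_m.

Definition dotmx u v : R := (u^T *m v) 0 0.

Lemma dotmx_mx11 u v : u^T *m v = (dotmx u v)%:M.
Proof. exact: mx11_scalar. Qed.

Lemma dotmxC u v : dotmx u v = dotmx v u.
Proof. by rewrite /dotmx -[u^T *m v]trmxK trmx_mul trmxK mxE. Qed.

Lemma dotmxBl u v w : dotmx (u - v) w = dotmx u w - dotmx v w.
Proof. by rewrite /dotmx raddfB mulmxBl !mxE. Qed.

Lemma dotmx_sum u v : dotmx u v = \sum_i u i 0 * v i 0.
Proof. by rewrite /dotmx mxE; apply: eq_bigr => i _; rewrite mxE. Qed.

Lemma dotmx_ge0 u : 0 <= dotmx u u.
Proof. by rewrite dotmx_sum sumr_ge0 // => i _; rewrite -expr2 sqr_ge0. Qed.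

Lemma dotmx_eq0 u : dotmx u u = 0 -> u = 0.
Proof.
rewrite dotmx_sum => /psumr_eq0P u0; apply/matrixP => i j; rewrite (ord1 j) mxE.
by apply/eqP; rewrite -sqrf_eq0 expr2 u0 // => k _; rewrite -expr2 sqr_ge0.
Qed.

(* Householder reflection; for w = 0 the factor 2 / 0 is 0, so reflection 0 = 1
   and the lemmas below need no nonvanishing hypothesis. *)
Definition reflection w : 'M[R]_m := 1%:M - (2 / dotmx w w) *: (w *m w^T).

Lemma tr_reflection w : (reflection w)^T = reflection w.
Proof. by rewrite /reflection linearB /= linearZ /= trmx_mul trmxK trmx1. Qed.

Lemma reflection_orthogonal w : (reflection w)^T *m reflection w = 1%:M.
Proof.
rewrite tr_reflection /reflection.
have WW : w *m w^T *m (w *m w^T) = dotmx w w *: (w *m w^T).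
  by rewrite mulmxA -[w *m w^T *m w]mulmxA dotmx_mx11 mul_mx_scalar -scalemxAl.
have kk (d : R) : 2 / d * (2 / d) * d = 2 / d + 2 / d.
  by have [->|d0] := eqVneq d 0; [rewrite invr0 !mulr0 addr0 | field].
rewrite mulmxBl mul1mx mulmxBr mulmx1 -scalemxAl -scalemxAr WW !scalerA kk.
by rewrite scalerDl opprB addrK subrK.
Qed.

Lemma reflection_swap x y : dotmx x x = dotmx y y -> reflection (x - y) *m x = y.
Proof.
move=> xy; set w := x - y.
have wy : dotmx w y = - dotmx w x.
  by rewrite /w !dotmxBl [dotmx y x]dotmxC xy opprB.
have ww : dotmx w w = dotmx w x + dotmx w x.
  by rewrite {1}/w [dotmx w (x - y)]dotmxC dotmxBl -!(dotmxC w) wy opprK.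
rewrite /reflection mulmxBl mul1mx -scalemxAl -mulmxA dotmx_mx11 mul_mx_scalar scalerA.
have [wx0|wx0] := eqVneq (dotmx w x) 0.
  have w0 : w = 0 by apply: dotmx_eq0; rewrite ww wx0 addr0.
  by rewrite w0 scaler0 subr0; apply/subr0_eq.
have -> : 2 / dotmx w w * dotmx w x = 1.
  by rewrite ww; field; rewrite -mulr2n mulrn_eq0.
by rewrite scale1r /w opprB addrC subrK.
Qed.

End Reflection.

Lemma orthogonal_col0 (R : rcfType) m (c : 'cV[R]_m.+1) :
  exists2 Q : 'M[R]_m.+1, Q^T *m Q = 1%:M & c = Num.sqrt (dotmx c c) *: col 0 Q.
Proof.
set s := Num.sqrt (dotmx c c); set e : 'cV[R]_m.+1 := delta_mx 0 0.
have ss : dotmx (s *: e) (s *: e) = dotmx c c.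
  rewrite [LHS]/dotmx -scalemxAr [(s *: e)^T]linearZ /= -scalemxAl /e trmx_delta.
  by rewrite mul_delta_mx !mxE eqxx /= mulr1 -expr2 sqr_sqrtr ?dotmx_ge0.
exists (reflection (s *: e - c)); first exact: reflection_orthogonal.
by rewrite colE scalemxAr reflection_swap.
Qed.

Section OrthogonalTriangularization.
Variable R : rcfType.

Lemma nilpotent_ker n (A : 'M[R]_n.+1) k : A ^+ k = 0 ->
  exists2 c : 'cV_n.+1, c != 0 & A *m c = 0.
Proof.
move=> Ak; have /det0P [v v0 vA] : \det A^T == 0.
  rewrite det_tr -[_ == 0]negbK -unitfE -unitmxE.
  by apply/negP => /(unitrX k); rewrite Ak unitr0.
exists v^T; first by rewrite trmx_eq0.
by rewrite -[A]trmxK -trmx_mul vA trmx0.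
Qed.

Lemma nilpotent_orthogonal_strictly_upper n (A : 'M[R]_n) k : A ^+ k = 0 ->
  exists2 Q : 'M[R]_n, Q^T *m Q = 1%:M & strictly_upper_mx (Q^T *m A *m Q).
Proof.
elim: n A => [|n IHn] A Ak; first by exists 1%:M; [rewrite trmx1 mulmx1 | case].
have [c c0 Ac] := nilpotent_ker Ak.
have [Q1 Q1o cQ1] := orthogonal_col0 c.
have AQ1 : A *m col 0 Q1 = 0.
  have /eqP := Ac; rewrite cQ1 -scalemxAr scalemx_eq0 => /orP [/eqP s0 | /eqP //].
  by move: c0; rewrite cQ1 s0 scale0r eqxx.
set B : 'M_(1 + n) := Q1^T *m A *m Q1.
have BbD : B = block_mx 0 (ursubmx B) 0 (drsubmx B).
  by apply: col0_eq0_ublock; rewrite colE -mulmxA -colE -mulmxA AQ1 mulmx0.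
set b := ursubmx B in BbD; set D := drsubmx B in BbD.
have Dk : D ^+ k = 0.
  have [Y BY] := ublock_mxX 0 b D k.
  rewrite -(block_mxKdr (0 ^+ k) Y 0 (D ^+ k)) -BY -BbD /B conj_mxX // Ak.
  by rewrite mulmx0 mul0mx; apply/matrixP => i j; rewrite !mxE.
have [Q2 Q2o sQ2] := IHn D Dk.
set P : 'M_(1 + n) := block_mx 1%:M 0 0 Q2.
have Po : P^T *m P = 1%:M.
  rewrite tr_block_mx !trmx0 trmx1 mulmx_block !mulmx0 !mul0mx !addr0 !add0r.
  by rewrite mulmx1 Q2o -scalar_mx_block.
have PBP : P^T *m B *m P = block_mx 0 (b *m Q2) 0 (Q2^T *m D *m Q2).
  rewrite BbD tr_block_mx !trmx0 trmx1 !mulmx_block.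
  by rewrite !(mulmx0, mul0mx, mul1mx, addr0, add0r).
exists (Q1 *m P).
  by rewrite trmx_mul -mulmxA (mulmxA Q1^T) Q1o mul1mx Po.
rewrite trmx_mul -!mulmxA (mulmxA Q1^T) (mulmxA (Q1^T *m A)) -/B mulmxA PBP.
exact: strictly_upper_ublock0.
Qed.

End OrthogonalTriangularization.

Section Frobenius.
Variable R : realFieldType.

Definition frobenius2 m n (A : 'M[R]_(m, n)) : R := \sum_i \sum_j A i j ^+ 2.

Lemma frobenius2_0 m n : frobenius2 (0 : 'M[R]_(m, n)) = 0.
Proof. by rewrite /frobenius2 big1 // => i _; rewrite big1 // => j _; rewrite mxE expr0n. Qed.

Lemma frobenius2_block m1 m2 n1 n2 (A : 'M[R]_(m1, n1)) (B : 'M[R]_(m1, n2))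
    (C : 'M[R]_(m2, n1)) (D : 'M[R]_(m2, n2)) :
  frobenius2 (block_mx A B C D) = frobenius2 A + frobenius2 B + frobenius2 C + frobenius2 D.
Proof.
rewrite /frobenius2 big_split_ord /=.
have top : \sum_(i < m1) \sum_(j < n1 + n2) block_mx A B C D (lshift m2 i) j ^+ 2
    = \sum_i (\sum_j A i j ^+ 2 + \sum_j B i j ^+ 2).
  apply: eq_bigr => i _; rewrite big_split_ord /=.
  by congr (_ + _); apply: eq_bigr => j _; rewrite ?block_mxEul ?block_mxEur.
have bot : \sum_(i < m2) \sum_(j < n1 + n2) block_mx A B C D (rshift m1 i) j ^+ 2
    = \sum_i (\sum_j C i j ^+ 2 + \sum_j D i j ^+ 2).
  apply: eq_bigr => i _; rewrite big_split_ord /=.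
  by congr (_ + _); apply: eq_bigr => j _; rewrite ?block_mxEdl ?block_mxEdr.
by rewrite top bot !big_split /= !addrA.
Qed.

Lemma frobenius2_trace m n (A : 'M[R]_(m, n)) : frobenius2 A = \tr (A *m A^T).
Proof.
rewrite /frobenius2 /mxtrace; apply: eq_bigr => i _; rewrite mxE.
by apply: eq_bigr => j _; rewrite mxE expr2.
Qed.

Lemma frobenius2_orthogonal_conj n (Q X : 'M[R]_n) : Q^T *m Q = 1%:M ->
  frobenius2 (Q *m X *m Q^T) = frobenius2 X.
Proof.
move=> Qo; rewrite !frobenius2_trace !trmx_mul trmxK.
rewrite -!mulmxA [Q^T *m (Q *m _)]mulmxA Qo mul1mx.
by rewrite mxtrace_mulC -!mulmxA Qo mulmx1.
Qed.

Lemma frobenius2_mx11 (A : 'M[R]_1) : frobenius2 A = A 0 0 ^+ 2.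
Proof. by rewrite /frobenius2 !big_ord1. Qed.

Lemma frobenius2_mx22 (A : 'M[R]_2) :
  frobenius2 A = A 0 0 ^+ 2 + A 0 1 ^+ 2 + A 1 0 ^+ 2 + A 1 1 ^+ 2.
Proof.
rewrite /frobenius2 !big_ord_recl !big_ord0 !addr0 !addrA.
by have -> : lift 0 (0 : 'I_1) = 1 :> 'I_2 by apply/val_inj.
Qed.

End Frobenius.

Lemma neg_sqr_factor_near (R : realFieldType) (t b : R) :
  exists u v : R, u * v = - b ^+ 2 /\ (u - t) ^+ 2 + v ^+ 2 <= 2 * b ^+ 2.
Proof.
have [bt|tb] := ltrP (b ^+ 2) (t ^+ 2).
  have t0 : t != 0 by apply: contraTneq bt => ->; rewrite expr0n /= -leNgt sqr_ge0.
  have tt : 0 < t ^+ 2 by rewrite exprn_even_gt0.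
  exists t, (- b ^+ 2 / t); split; first by rewrite mulrC divfK.
  have : - b ^+ 2 / t * t = - b ^+ 2 by rewrite divfK.
  move: (- b ^+ 2 / t) => v vt; rewrite subrr expr0n /= add0r.
  have : t ^+ 2 * (v ^+ 2 - b ^+ 2) <= 0 by nra.
  by rewrite pmulr_rle0 // subr_le0 => vb; nra.
have [tb0|tb0] := lerP 0 (t * b).
  by exists b, (- b); split; [rewrite mulrN expr2 | nra].
by exists (- b), b; split; [rewrite mulNr expr2 | nra].
Qed.

Section SpectrumAssignment.
Variable R : realType.

Lemma normc_sqr (a b : R) : Normc.normc (a +i* b)%C ^+ 2 = a ^+ 2 + b ^+ 2.
Proof. by rewrite /= sqr_sqrtr // addr_ge0 // sqr_ge0. Qed.

Lemma spec_eq_perm n (M : 'M[R]_n) l1 l2 : perm_eq l1 l2 -> spec_eq M l1 -> spec_eq M l2.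
Proof. by move=> l12; rewrite /spec_eq (perm_big _ l12). Qed.

Lemma spec_eq_mx00 (M : 'M[R]_0) : spec_eq M [::].
Proof. by rewrite /spec_eq big_nil /char_poly det_mx00. Qed.

Lemma spec_eq_ublock p m (X : 'M[R]_p) (Y : 'M[R]_(p, m)) (Z : 'M[R]_m) l1 l2 :
  spec_eq X l1 -> spec_eq Z l2 -> spec_eq (block_mx X Y 0 Z) (l1 ++ l2).
Proof.
rewrite /spec_eq /complexify => X_l1 Z_l2.
by rewrite map_block_mx map_mx0 char_poly_ublock X_l1 Z_l2 big_cat.
Qed.

Lemma spec_eq_mx11 (a : R) : spec_eq (a%:M : 'M_1) [:: a%:C%C].
Proof.
rewrite /spec_eq /char_poly det_mx11 big_cons big_nil mulr1 /char_poly_mx /complexify.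
by rewrite !mxE /= mulr1n.
Qed.

Definition pair_block (a u v : R) : 'M[R]_2 :=
  \matrix_(i, j) if i == j then a else if i == 0 then u else v.

Lemma spec_eq_pair_block (a b u v : R) : u * v = - b ^+ 2 ->
  spec_eq (pair_block a u v) [:: (a +i* b)%C; (a +i* b)%C^*].
Proof.
move=> uv; rewrite /spec_eq /char_poly det_mx22 !big_cons big_nil mulr1.
rewrite /char_poly_mx /complexify !mxE /= mulr1n mulr0n !sub0r.
have -> : (a +i* b)%C^* = a%:C%C - (0 +i* b)%C by simpc.
have -> : (a +i* b)%C = a%:C%C + (0 +i* b)%C by simpc.
have uvC : (u%:C * v%:C)%C = (0 +i* b)%C * (0 +i* b)%C by simpc; rewrite uv expr2.
rewrite !polyCD polyCN mulrNN -!polyCM uvC polyCM.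
ring.
Qed.

Lemma conj_invariant_perm (l1 l2 : seq R[i]) :
  perm_eq l1 l2 -> conj_invariant l1 -> conj_invariant l2.
Proof.
move=> l12 l1_conj; rewrite /conj_invariant.
by apply: perm_trans (perm_trans l1_conj l12); rewrite perm_sym perm_map.
Qed.

Lemma conj_invariant_cases (lam : seq R[i]) : conj_invariant lam -> lam != [::] ->
  (exists x l, [/\ x^* = x, perm_eq lam (x :: l) & conj_invariant l]) \/
  (exists x l, perm_eq lam (x :: x^* :: l) /\ conj_invariant l).
Proof.
case: lam => [//|x l0] lam_conj _.
have [xr|xnr] := eqVneq x^* x.
  by left; exists x, l0; split=> //; move: lam_conj; rewrite /conj_invariant /= xr perm_cons.
have xc_l0 : x^* \in l0.
  have : x^* \in x :: l0 by rewrite -(perm_mem lam_conj) map_f ?mem_head.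
  by rewrite inE (negbTE xnr).
set l := rem x^* l0; have lam_perm : perm_eq (x :: l0) (x :: x^* :: l).
  by rewrite perm_cons perm_to_rem.
right; exists x, l; split => //.
have := conj_invariant_perm lam_perm lam_conj.
rewrite /conj_invariant /= conjCK => swapped.
rewrite -(perm_cons x) -(perm_cons x^*) (permPl swapped).
by apply/permP => P /=; rewrite addnCA.
Qed.

Lemma ublock_spectrum_step p m (T : 'M[R]_(p + m)) (B : 'M[R]_p) (M' : 'M[R]_m)
    l1 l2 lam :
  dlsubmx T = 0 -> perm_eq (l1 ++ l2) lam ->
  frobenius2 (B - ulsubmx T) <= \sum_(x <- l1) Normc.normc x ^+ 2 -> spec_eq B l1 ->
  frobenius2 (M' - drsubmx T) <= \sum_(x <- l2) Normc.normc x ^+ 2 -> spec_eq M' l2 ->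
  exists M : 'M[R]_(p + m),
    frobenius2 (M - T) <= \sum_(x <- lam) Normc.normc x ^+ 2 /\ spec_eq M lam.
Proof.
move=> T0 l12 BT sB MT sM; exists (block_mx B (ursubmx T) 0 M'); split.
  rewrite -(perm_big _ l12) big_cat /= -[T in X in frobenius2 X]submxK T0.
  rewrite opp_block_mx add_block_mx frobenius2_block block_mxKur !subrr !frobenius2_0 !addr0.
  exact: lerD.
exact: spec_eq_perm l12 (spec_eq_ublock _ sB sM).
Qed.

Lemma strictly_upper_spectrum_near n (T : 'M[R]_n) (lam : seq R[i]) :
  strictly_upper_mx T -> size lam = n -> conj_invariant lam ->
  exists M : 'M[R]_n,
    frobenius2 (M - T) <= \sum_(x <- lam) Normc.normc x ^+ 2 /\ spec_eq M lam.
Proof.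
elim/ltn_ind: n T lam => n IHn T lam sT lam_n lam_conj.
have [lam0|lam0] := eqVneq lam [::].
  move: lam_n; rewrite lam0 => /= n0; subst n; exists T.
  by rewrite subrr frobenius2_0 big_nil; split; last exact: spec_eq_mx00.
have [[x [l [xr lam_perm l_conj]]] | [x [l [lam_perm l_conj]]]] :=
  conj_invariant_cases lam_conj lam0.
- have n_l : n = 1 + size l by rewrite -lam_n (perm_size lam_perm).
  clear lam_n; subst n.
  have [M' [MT sM']] := IHn _ (leqnn _) _ _ (strictly_upper_drsub sT) erefl l_conj.
  case: x xr lam_perm => a b [b_opp] lam_perm.
  have b0 : b = 0 by lra.
  subst b.
  apply: (ublock_spectrum_step (strictly_upper_dlsub sT) _ _ (spec_eq_mx11 a) MT sM').
    by rewrite perm_sym.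
  rewrite frobenius2_mx11 !mxE sT // subr0 eqxx mulr1n big_seq1 normc_sqr.
  by rewrite expr0n addr0.
- have n_l : n = 2 + size l by rewrite -lam_n (perm_size lam_perm).
  clear lam_n; subst n.
  have [M' [MT sM']] := IHn _ (leqnSn _) _ _ (strictly_upper_drsub sT) erefl l_conj.
  case: x lam_perm => a b lam_perm.
  have [u [v [uv uv_near]]] := neg_sqr_factor_near (ulsubmx T 0 1) b.
  apply: (ublock_spectrum_step (strictly_upper_dlsub sT) _ _ (spec_eq_pair_block a uv) MT sM').
    by rewrite perm_sym.
  rewrite !mxE in uv_near; rewrite frobenius2_mx22 !mxE /=.
  rewrite [T (lshift _ 0) (lshift _ 0)]sT // [T (lshift _ 1) _]sT // [T (lshift _ 1) _]sT //.
  rewrite !subr0 !big_cons big_nil addr0 !normc_sqr sqrrN.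
  lra.
Qed.

End SpectrumAssignment.

Theorem corollary5p5 (R : realType) (n : nat) (A : 'M[R]_n) (eps : R) :
  nilpotent_mx A -> 0 < eps ->
  forall lam : seq R[i],
    size lam = n ->
    conj_invariant lam ->
    \sum_(x <- lam) Normc.normc x ^+ 2 < eps ^+ 2 ->
    exists M : 'M[R]_n, frobenius (M - A) < eps /\ spec_eq M lam.
Proof.
move=> [k Ak] eps0 lam lam_n lam_conj lam_eps.
have [Q Qo sT] := nilpotent_orthogonal_strictly_upper Ak.
have [M [MT sM]] := strictly_upper_spectrum_near sT lam_n lam_conj.
have Qo' := mulmx1C Qo.
exists (Q *m M *m Q^T); split.
  have -> : Q *m M *m Q^T - A = Q *m (M - Q^T *m A *m Q) *m Q^T.
    by rewrite mulmxBr mulmxBl !mulmxA Qo' mul1mx -!mulmxA Qo' mulmx1.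
  change (Num.sqrt (frobenius2 (Q *m (M - Q^T *m A *m Q) *m Q^T)) < eps).
  rewrite frobenius2_orthogonal_conj // -[eps]gtr0_norm // -sqrtr_sqr ltr_sqrt ?exprn_gt0 //.
  exact: le_lt_trans MT lam_eps.
rewrite /spec_eq /complexify !map_mxM -map_trmx char_poly_conj //.
by rewrite map_trmx -map_mxM Qo' map_mx1.
Qed.
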